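(* Consider DTR with heuristic $h_{e^*}$ on the linear feedforward network (as in the context). Suppose DTR seeks to (re)materialize the forward tensor $t_k$, $k \le N$, where the resident tensor preceding $t_k$ is $t_j$ with $j < k$, and suppose $t_j$ is not evicted during the computation of $t_k$. If the algorithm begins with $t_j$ in memory and with $M$ units of memory, and runs until computing $t_k$, then the maximum length $L$ of any evicted sequence of tensors between $t_j$ and $t_k$ satisfies $L \le \frac{2((k-j)-1)}{M-1}$.
   Context: Linear feedforward network: tensors $t_0, \dots, t_N$ (and gradients $\hat t_1,\dots,\hat t_N$), with $t_i = f_i(t_{i-1})$ for $1 \le i \le N$; $t_0$ is always resident and free. Every tensor occupies one unit of memory and every operator application costs one unit. Computing $t_k$ from a resident $t_j$ means computing $t_{j+1}, t_{j+2}, \dots, t_k$ in order. An evicted sequence between $t_j$ and $t_k$ is a maximal run of consecutive forward tensors $t_{a+1}, \dots, t_{b-1}$ ($j \le a < b \le k$) none of which is resident; its length is the number of tensors in it. DTR: when a new tensor must be stored and memory is full, DTR evicts an evictable resident tensor (one not needed as input to the operation currently being performed) with minimal heuristic score. Heuristic $h_{e^*}(t) = |e^*(t)|$, where $e^*(t)$ is the set of currently evicted, already-computed tensors reachable from $t$ backwards or forwards along dependency edges through evicted tensors only (in the chain, the adjacent evicted runs on either side of $t$); not-yet-computed tensors are not considered. *)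

From mathcomp Require Import all_boot all_order all_algebra.
Set Implicit Arguments. Unset Strict Implicit. Unset Printing Implicit Defensive.

(* A DTR state during the (re)materialization of t_k from t_j:
   [cur] = index of the most recently computed forward tensor
   (tensors t_j .. t_cur have been computed; t_(cur+1) .. t_k are not yet
   computed); [res i] = t_i is resident. *)
Record dtr_state := DtrState { cur : nat; res : nat -> bool }.

Definition dtr_init (j : nat) : dtr_state := DtrState j (fun i => i == j).

Definition evicted (j : nat) (s : dtr_state) (i : nat) : bool :=
  (j <= i <= cur s) && ~~ res s i.

Fixpoint run_left (ev : pred nat) (i : nat) : nat :=
  match i with
  | 0 => 0
  | p.+1 => if ev p then (run_left ev p).+1 else 0
  end.

Fixpoint run_right (ev : pred nat) (i fuel : nat) : nat :=
  match fuel with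
  | 0 => 0
  | f.+1 => if ev i.+1 then (run_right ev i.+1 f).+1 else 0
  end.

(* Heuristic h_{e*}(t_i) = |e*(t_i)|: the evicted, already-computed tensors
   reachable from t_i through evicted tensors only, i.e. the adjacent evicted
   runs on either side of t_i.  (Fuel k - j suffices: computed tensors lie in
   [j, k].) *)
Definition score (j k : nat) (s : dtr_state) (i : nat) : nat :=
  run_left (evicted j s) i + run_right (evicted j s) i (k - j).

(* Memory in use: number of resident tensors among t_j .. t_cur
   (every tensor occupies one unit). *)
Definition mem (j : nat) (s : dtr_state) : nat :=
  count (res s) (iota j ((cur s).+1 - j)).

(* Evictable: resident, computed, and not the input t_cur of the operation
   currently being performed (computing t_(cur+1)). *)
Definition evictable (j : nat) (s : dtr_state) (i : nat) : bool :=
  [&& j <= i <= cur s, res s i & i != cur s].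

Inductive dtr_step (j k M : nat) : dtr_state -> option nat -> dtr_state -> Prop :=
| StepCompute s :
    cur s < k -> mem j s < M ->
    dtr_step j k M s None
      (DtrState (cur s).+1 (fun i => (i == (cur s).+1) || res s i))
| StepEvict s v :
    cur s < k -> M <= mem j s ->
    evictable j s v ->
    (forall w, evictable j s w -> score j k s v <= score j k s w) ->
    dtr_step j k M s (Some v) (DtrState (cur s) (fun i => (i != v) && res s i)).

Inductive dtr_run (j k M : nat) : dtr_state -> dtr_state -> Prop :=
| RunRefl s : dtr_run j k M s s
| RunStep s l s' s'' :
    dtr_step j k M s l s' -> l <> Some j -> dtr_run j k M s' s'' ->
    dtr_run j k M s s''.

Definition evicted_seq (j k : nat) (s : dtr_state) (a b : nat) : Prop :=
  [/\ j <= a < b, b <= k,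
      (forall i, a < i < b -> ~~ res s i),
      (a = j \/ res s a) & (b = k \/ res s b)].

From Pilot Require Import Defs.
From mathcomp Require Import all_boot all_order all_algebra.
From mathcomp Require Import zify.
Set Implicit Arguments.
Unset Strict Implicit.
Unset Printing Implicit Defensive.

Import GRing.Theory Num.Theory.

(* Invariant: any two consecutive resident tensors enclose a gap of length L
   with L * (M - 1) <= 2 * (k - j - 1).  Computing a tensor only creates a gap
   of length 0.  Evicting v merges the two gaps around v into one of length at
   most h(v) + 1.  Memory is full, so at least M - 1 tensors are evictable, and
   their scores add up to at most twice the number E of evicted tensors, since
   each evicted run is adjacent to at most two resident tensors; as h(v) is
   minimal, h(v) * (M - 1) <= 2 E.  Since E plus the memory in use is at most
   k - j, this gives the bound for the merged gap. *)

Section Runs.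

Variable ev : pred nat.

Lemma count_iota0_recr n : count ev (iota 0 n.+1) = count ev (iota 0 n) + ev n.
Proof. by rewrite -addn1 iotaD count_cat /= addn0. Qed.

Lemma sum_run_left n :
  \sum_(0 <= w < n | ~~ ev w) run_left ev w + run_left ev n = count ev (iota 0 n).
Proof.
elim: n => [|n IH]; first by rewrite big_geq.
rewrite count_iota0_recr big_mkcond big_nat_recr //= -big_mkcond -IH.
by case: (ev n) => /=; lia.
Qed.

Lemma run_left_ge p w : (forall x, p <= x < w -> ev x) -> w - p <= run_left ev w.
Proof.
elim: w => [|w IH] evP //=.
have [le_pw | lt_wp] := leqP p w; last lia.
rewrite evP; last lia.
suff: w - p <= run_left ev w by lia.
by apply: IH => x /andP [le_px lt_xw]; apply: evP; lia.
Qed.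

Lemma run_right_ge d w f :
  (forall x, w < x <= w + d -> ev x) -> d <= f -> d <= run_right ev w f.
Proof.
elim: d w f => [|d IH] w [|f] evP //= le_df.
rewrite evP; last lia.
suff: d <= run_right ev w.+1 f by [].
by apply: IH => [x /andP [lt_wx le_xd]|]; [apply: evP; lia | lia].
Qed.

Variable K : nat.
Hypothesis ev_ge : forall x, K <= x -> ~~ ev x.

Lemma run_right_fuel f w : K - w <= f -> run_right ev w f = run_right ev w (K - w).
Proof.
elim: f w => [|f IH] w le_f; first by rewrite (_ : K - w = 0) //; lia.
have [lt_wK | le_Kw] := ltnP w K.
  rewrite (_ : K - w = (K - w.+1).+1) /=; last lia.
  by rewrite IH //; lia.
rewrite (_ : K - w = 0) /=; last lia.
by rewrite (negbTE (ev_ge (leqW le_Kw))).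
Qed.

Lemma sum_run_right_from m :
  \sum_(m.+1 <= w < K | ~~ ev w) run_right ev w (K - w) + run_right ev m (K - m)
  = count ev (iota m.+1 (K - m.+1)).
Proof.
move Ed: (K - m) => d; elim: d m Ed => [|d IH] m Ed.
  rewrite big_geq; last lia.
  by rewrite (_ : K - m.+1 = 0); last lia.
have Ed' : K - m.+1 = d by lia.
have [lt_mK | le_Km] := ltnP m.+1 K; last first.
  rewrite big_geq // Ed' /= (negbTE (ev_ge le_Km)).
  by rewrite (_ : d = 0); last lia.
rewrite big_ltn_cond // Ed'.
have -> : count ev (iota m.+1 d) = ev m.+1 + count ev (iota m.+2 (K - m.+2)).
  by rewrite (_ : d = (K - m.+2).+1); last lia.
rewrite -(IH m.+1 Ed'); set S := \sum_(_ <= _ < _ | _) _.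
by rewrite /=; case: (ev m.+1) => /=; lia.
Qed.

Lemma sum_run_right :
  \sum_(0 <= w < K | ~~ ev w) run_right ev w (K - w) <= count ev (iota 0 K).
Proof.
have [-> | K_pos] := posnP K; first by rewrite big_geq.
rewrite big_ltn_cond //; set S := \sum_(1 <= _ < _ | _) _.
have := sum_run_right_from 0; rewrite -/S subn0 subn1.
rewrite -[in iota 0 K](ltn_predK K_pos) /=.
by case: (ev 0) => /= sum_eq; lia.
Qed.

End Runs.

Lemma count_iota_from (p : pred nat) j n :
  j <= n -> (forall x, x < j -> ~~ p x) -> count p (iota 0 n) = count p (iota j (n - j)).
Proof.
move=> le_jn p_lt; rewrite -{1}(subnKC le_jn) iotaD count_cat add0n.
rewrite (@eq_in_count _ _ pred0) ?count_pred0 // => x.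
by rewrite mem_iota => /andP [_ lt_xj]; apply/negbTE/p_lt.
Qed.

Lemma evicted_gt_cur j s x : cur s < x -> ~~ evicted j s x.
Proof. by rewrite /evicted => lt_cx; apply/negP => /andP [/andP [_ le_xc] _]; lia. Qed.

Lemma evicted_lt_j j s x : x < j -> ~~ evicted j s x.
Proof. by rewrite /evicted => lt_xj; apply/negP => /andP [/andP [le_jx _] _]; lia. Qed.

Lemma count_evicted_add_mem j s : j <= cur s ->
  count (evicted j s) (iota 0 (cur s).+1) + Defs.mem j s = (cur s).+1 - j.
Proof.
move=> le_jc; rewrite (count_iota_from (leqW le_jc)) => [|x]; last exact: evicted_lt_j.
rewrite /Defs.mem -[RHS](size_iota j) -(count_predC (res s)) addnC; congr (_ + _).
apply: eq_in_count => x; rewrite mem_iota /evicted => /andP [le_jx lt_x].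
by rewrite le_jx /= (_ : x <= cur s) //; lia.
Qed.

Lemma count_evictable_mem j s : j <= cur s -> res s (cur s) ->
  (count (evictable j s) (iota 0 (cur s).+1)).+1 = Defs.mem j s.
Proof.
move=> le_jc res_cur.
rewrite (count_iota_from (leqW le_jc)) => [|x lt_xj]; last first.
  by rewrite /evictable; apply/negP => /and3P [/andP [le_jx _] _ _]; lia.
rewrite /Defs.mem (_ : (cur s).+1 - j = (cur s - j) + 1); last lia.
rewrite iotaD subnKC // !count_cat /= res_cur /evictable eqxx !andbF /= !addn0 addn1.
congr _.+1; apply: eq_in_count => x; rewrite mem_iota subnKC // => /andP [le_jx lt_xc].
by rewrite le_jx ltnW //= neq_ltn lt_xc andbT.
Qed.

Lemma sum_score_evictable j k s : j <= cur s < k ->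
  \sum_(0 <= w < (cur s).+1 | evictable j s w) score j k s w
    <= 2 * count (evicted j s) (iota 0 (cur s).+1).
Proof.
case/andP=> le_jc lt_ck; set ev := evicted j s; set K := (cur s).+1.
have ev_ge x : K <= x -> ~~ ev x by exact: evicted_gt_cur.
apply: (@leq_trans (\sum_(0 <= w < K | ~~ ev w)
                      (run_left ev w + run_right ev w (K - w)))).
  rewrite big_mkcond [leqRHS]big_mkcond; apply: leq_sum => w _.
  case: (boolP (evictable j s w)) => // /and3P [/andP [le_jw _] res_w _].
  have -> : ~~ ev w by rewrite /ev /evicted res_w andbF.
  by rewrite /score -/ev (run_right_fuel ev_ge) //; lia.
rewrite big_split mul2n -addnn leq_add ?sum_run_right //.
by rewrite -(sum_run_left ev K) leq_addr.
Qed.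

Lemma min_score_mul_le j k s v : j <= cur s < k -> res s (cur s) ->
  (forall w, evictable j s w -> score j k s v <= score j k s w) ->
  score j k s v * (Defs.mem j s).-1 <= 2 * count (evicted j s) (iota 0 (cur s).+1).
Proof.
move=> bounds res_cur v_min; apply: leq_trans (sum_score_evictable bounds).
have le_jc : j <= cur s by case/andP: bounds.
rewrite -(count_evictable_mem le_jc res_cur) /=.
rewrite -iter_addn_0 (_ : iter _ _ _ = \sum_(0 <= w < (cur s).+1 | evictable j s w) score j k s v).
  exact: leq_sum.
by rewrite big_const_seq /index_iota subn0.
Qed.

Lemma score_ge_gap j k s a v b :
  cur s <= k -> j <= a -> a < v < b -> b <= cur s ->
  (forall x, a < x < b -> x != v -> ~~ res s x) ->
  (b - a).-1 <= (score j k s v).+1.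
Proof.
move=> le_ck le_ja /andP [lt_av lt_vb] le_bc free.
have evP x : a < x < b -> x != v -> evicted j s x.
  move=> /[dup] xab /andP [lt_ax lt_xb] xv.
  by rewrite /evicted free // andbT (leq_trans le_ja (ltnW lt_ax)) (leq_trans (ltnW lt_xb) le_bc).
have left_run : v - a.+1 <= run_left (evicted j s) v.
  by apply: run_left_ge => x /andP [lt_ax lt_xv]; apply: evP; [lia | rewrite neq_ltn lt_xv].
have right_run : b - v - 1 <= run_right (evicted j s) v (k - j).
  apply: run_right_ge => [x /andP [lt_vx le_x]|]; last lia.
  by apply: evP; [lia | rewrite neq_ltn lt_vx orbT].
rewrite /score; lia.
Qed.

Definition gaps_bounded j k M (s : dtr_state) : Prop :=
  forall a b, a < b -> res s a -> res s b -> (forall x, a < x < b -> ~~ res s x) ->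
  (b - a).-1 * (M - 1) <= 2 * (k - j - 1).

Record dtr_inv j k M (s : dtr_state) : Prop := DtrInv {
  inv_cur : j <= cur s <= k;
  inv_res_j : res s j;
  inv_res_cur : res s (cur s);
  inv_res_range : forall x, res s x -> j <= x <= cur s;
  (* If M <= 1, not even t_(j+1) fits next to t_j, so DTR is stuck at t_j. *)
  inv_mem : 1 < M \/ cur s = j;
  inv_gaps : gaps_bounded j k M s }.

Lemma dtr_inv_init j k M : j <= k -> dtr_inv j k M (dtr_init j).
Proof.
move=> le_jk; split => /=; rewrite ?eqxx ?leqnn ?le_jk //.
- by move=> x /eqP ->; rewrite leqnn.
- by right.
- by move=> a b _ /eqP -> /eqP ->; rewrite subnn.
Qed.

Lemma evict_gap_bounded j k M s v a b :
  dtr_inv j k M s -> cur s < k -> M <= Defs.mem j s ->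
  (forall w, evictable j s w -> score j k s v <= score j k s w) ->
  a < v < b -> res s a -> res s b -> (forall x, a < x < b -> x != v -> ~~ res s x) ->
  (b - a).-1 * (M - 1) <= 2 * (k - j - 1).
Proof.
case=> /andP [le_jc le_ck] _ res_cur res_range _ _ lt_ck le_M v_min av_b res_a res_b free.
have /andP [le_ja _] := res_range a res_a.
have /andP [_ le_bc] := res_range b res_b.
have gap := score_ge_gap le_ck le_ja av_b le_bc free.
have score_mem := min_score_mul_le (introT andP (conj le_jc lt_ck)) res_cur v_min.
have cnt := count_evicted_add_mem le_jc.
have mem_evictable := count_evictable_mem le_jc res_cur.
have : (b - a).-1 * (M - 1) <= (score j k s v).+1 * (Defs.mem j s).-1.
  by apply: leq_mul; lia.
rewrite mulSn; lia.
Qed.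

Lemma dtr_inv_compute j k M s : dtr_inv j k M s -> cur s < k -> Defs.mem j s < M ->
  dtr_inv j k M (DtrState (cur s).+1 (fun i => (i == (cur s).+1) || res s i)).
Proof.
case=> /andP [le_jc _] res_j res_cur res_range M_cur gaps lt_ck lt_mem; split => /=.
- by rewrite (leqW le_jc).
- by rewrite res_j orbT.
- by rewrite eqxx.
- by move=> x /orP [/eqP -> | /res_range]; lia.
- left; case: M_cur => // cur_j.
  by move: lt_mem; rewrite /Defs.mem cur_j subSnn /= res_j.
move=> a b lt_ab res_a res_b free.
have old x : x <= cur s -> (x == (cur s).+1) = false by move=> le_xc; apply/eqP; lia.
have le_b : b <= (cur s).+1 by case/orP: res_b => [/eqP -> | /res_range]; lia.
have [le_bc | lt_cb] := leqP b (cur s).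
  move: res_a res_b; rewrite /= !old; [move=> res_a res_b | lia | lia].
  apply: gaps => // x /[dup] xab /andP [_ lt_xb].
  by move: (free x xab); rewrite /= old //; lia.
have le_ca : cur s <= a.
  rewrite leqNgt; apply/negP => lt_ac.
  have /negP := free (cur s) (introT andP (conj lt_ac lt_cb)).
  by rewrite /= res_cur orbT.
by rewrite (_ : (b - a).-1 = 0) //; lia.
Qed.

Lemma dtr_inv_evict j k M s v : dtr_inv j k M s -> cur s < k -> M <= Defs.mem j s ->
  evictable j s v -> (forall w, evictable j s w -> score j k s v <= score j k s w) ->
  v != j -> dtr_inv j k M (DtrState (cur s) (fun i => (i != v) && res s i)).
Proof.
move=> inv lt_ck le_M /and3P [_ _ v_cur] v_min v_j.
have [bounds res_j res_cur res_range M_cur gaps] := inv; split => //=.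
- by rewrite eq_sym v_j.
- by rewrite eq_sym v_cur.
- by move=> x /andP [_ /res_range].
move=> a b lt_ab /andP [a_v res_a] /andP [b_v res_b] free.
have free' x : a < x < b -> x != v -> ~~ res s x.
  by move=> xab xv; have := free x xab; rewrite /= xv.
have [av_b | not_between] := boolP (a < v < b).
  exact: evict_gap_bounded inv lt_ck le_M v_min av_b res_a res_b free'.
apply: gaps => // x xab; apply: free' => //.
by apply: contraNneq not_between => <-.
Qed.

Lemma dtr_inv_run j k M s s' : dtr_run j k M s s' -> dtr_inv j k M s -> dtr_inv j k M s'.
Proof.
elim=> {s s'} // s l s' s'' step l_j _ IH inv; apply: IH.
case: step l_j inv => [t lt_ck lt_mem _ inv | t v lt_ck le_mem ev_v v_min v_j inv].
  exact: dtr_inv_compute.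
by apply: dtr_inv_evict => //; apply/eqP => v_eq; apply: v_j; rewrite v_eq.
Qed.

Local Open Scope ring_scope.

Theorem lemma3 (N j k M : nat) (s : dtr_state) :
  (j < k)%N -> (k <= N)%N ->
  dtr_run j k M (dtr_init j) s -> cur s = k ->
  forall a b, evicted_seq j k s a b ->
    ((b - a).-1)%:R <= (2 * ((k - j) - 1))%:R / (M - 1)%:R :> rat.
Proof.
move=> lt_jk _ run cur_k a b [/andP [_ lt_ab] _ free end_a end_b].
have [_ res_j res_cur _ M_cur gaps] := dtr_inv_run run (dtr_inv_init M (ltnW lt_jk)).
have lt1M : (1 < M)%N.
  by case: M_cur => // cur_j; move: lt_jk; rewrite -cur_k cur_j ltnn.
have res_a : res s a by case: end_a => [-> |].
have res_b : res s b by case: end_b => [-> |]; rewrite // -cur_k.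
rewrite ler_pdivlMr ?ltr0n ?subn_gt0 // -natrM ler_nat.
exact: gaps.
Qed.
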